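(* Consider the following slot-assignment problem. There are $M$ agents $a_1,\dots,a_M$ and $N$ stations $s_1,\dots,s_N$, a processing time $T\in\mathbb{Z}_{>0}$ and an integer $K\ge 1$; the time window $[0,KT)$ of each station $s_j$ is divided into $K$ working slots $[kT,(k+1)T)$, $k=0,\dots,K-1$. For every agent $a_i$ and station $s_j$ an arrival time $e_{i,j}\ge 0$ is given. An assignment maps each agent $a_i$ either to the NULL station or to a station $s_j$ together with a working slot $k\in\{0,\dots,K-1\}$ such that $e_{i,j}\le kT$, where no working slot of any station is assigned to more than one agent. The total idle time of an assignment is $T$ times the number of working slots (over all stations) that are not assigned to any agent, i.e. $T\,(NK-\#\{\text{agents not assigned NULL}\})$. Define the unweighted ITO flow network as follows: vertices are a source, a sink, one agent vertex $a_i$ per agent, and one working slot vertex $s_{j,k}$ for each station $s_j$ and $k=0,\dots,K-1$. Edges are: source $\to a_i$ with capacity $1$ for every $i$; $a_i\to s_{j,k}$ with capacity $1$ if and only if $k$ is the smallest integer in $\{0,\dots,K-1\}$ with $e_{i,j}\le kT$ (no edge from $a_i$ to station $s_j$ if no such $k$ exists); $s_{j,k-1}\to s_{j,k}$ with capacity $K$ for all $j$ and $k=1,\dots,K-1$; and $s_{j,k}\to$ sink with capacity $1$ for all $j,k$. Then every integral maximum flow on this network corresponds to an assignment minimizing the total idle time: decomposing the flow into source–sink paths, each path of the form source $\to a_i\to s_{j,k_0}\to s_{j,k_0+1}\to\cdots\to s_{j,k}\to$ sink assigns agent $a_i$ to working slot $k$ of station $s_j$, and every agent not on such a path is assigned the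 NULL station; the resulting assignment is feasible and has minimum total idle time among all assignments.
   Context: This is the station-assignment part of One-Shot Target Assignment and Path Finding in a sortation center: agents queue at stations, each station admits at most one agent per working slot of length $T$, and an agent whose (estimated) arrival time at a station is $e$ can occupy any working slot of that station starting at a time $kT\ge e$ within the window. Agents assigned the NULL station are inactive and do not affect the total idle time. *)

From mathcomp Require Import all_boot all_order all_algebra.
Set Implicit Arguments. Unset Strict Implicit. Unset Printing Implicit Defensive.
Import Order.TTheory GRing.Theory Num.Theory.

Section Flows.
Variables (V : finType) (cap : V -> V -> nat) (s t : V).

Definition is_flow (f : V -> V -> nat) : Prop :=
  (forall u v, f u v <= cap u v) /\
  (forall v, v != s -> v != t -> \sum_(u : V) f u v = \sum_(w : V) f v w).

Definition flow_value (f : V -> V -> nat) : int :=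
  (\sum_(v : V) f s v)%:Z - (\sum_(v : V) f v s)%:Z.

Definition is_max_flow (f : V -> V -> nat) : Prop :=
  is_flow f /\ forall g, is_flow g -> (flow_value g <= flow_value f)%R.

Definition path_edges (p : seq V) : seq (V * V) := zip p (behead p).

Definition st_path (p : seq V) : Prop :=
  exists rest, p = s :: rest /\ last s rest = t /\
               path (fun u v => 0 < cap u v) s rest.

Definition path_decomposition (f : V -> V -> nat) (P : seq (seq V)) : Prop :=
  (forall p, p \in P -> st_path p) /\
  (forall u v, f u v = \sum_(p <- P) count (pred1 (u, v)) (path_edges p)).
End Flows.

(* vertices: inl true = source, inl false = sink, inr (inl i) = agent a_i,
   inr (inr (j,k)) = working slot s_{j,k} *)
Notation ito_vtx M N K := (bool + ('I_M + ('I_N * 'I_K)))%type.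

Definition ito_src {M N K : nat} : ito_vtx M N K := inl true.
Definition ito_snk {M N K : nat} : ito_vtx M N K := inl false.
Definition ito_agent {M N K : nat} (i : 'I_M) : ito_vtx M N K := inr (inl i).
Definition ito_slot {M N K : nat} (j : 'I_N) (k : 'I_K) : ito_vtx M N K :=
  inr (inr (j, k)).

Local Open Scope ring_scope.

Definition first_slot (R : realFieldType) (M N K T : nat)
    (e : 'I_M -> 'I_N -> R) (i : 'I_M) (j : 'I_N) (k : 'I_K) : bool :=
  (e i j <= ((k * T)%N)%:R) &&
  [forall k' : 'I_K, (k' < k)%N ==> ~~ (e i j <= ((k' * T)%N)%:R)].

Definition ito_cap (R : realFieldType) (M N K T : nat) (e : 'I_M -> 'I_N -> R)
    (u v : ito_vtx M N K) : nat :=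
  match u, v with
  | inl true, inr (inl _) => 1
  | inr (inl i), inr (inr (j, k)) =>
      if first_slot T e i j k then 1 else 0
  | inr (inr (j, k)), inr (inr (j', k')) =>
      if (j == j') && (nat_of_ord k' == (nat_of_ord k).+1) then K else 0
  | inr (inr _), inl false => 1
  | _, _ => 0%N
  end.

(* None = NULL station; Some (j,k) = working slot k of station s_j *)
Definition assignment (M N K : nat) := 'I_M -> option ('I_N * 'I_K).

Definition feasible (R : realFieldType) (M N K T : nat)
    (e : 'I_M -> 'I_N -> R) (a : assignment M N K) : Prop :=
  (forall i j k, a i = Some (j, k) -> e i j <= ((k * T)%N)%:R) /\
  (forall i i', a i != None -> a i = a i' -> i = i').

Definition total_idle_time (M N K T : nat) (a : assignment M N K) : nat :=
  (T * (N * K - #|[set i | a i != None]|))%N.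

Definition min_idle (R : realFieldType) (M N K T : nat)
    (e : 'I_M -> 'I_N -> R) (a : assignment M N K) : Prop :=
  feasible T e a /\
  forall b : assignment M N K, feasible T e b ->
    (total_idle_time T a <= total_idle_time T b)%N.

(* the assignment read off a path decomposition: agent a_i is assigned slot
   s_{j,k} if some path goes source -> a_i -> ... -> s_{j,k} -> sink, and the
   NULL station if no path passes through a_i *)
Definition induced_assignment (M N K : nat) (P : seq (seq (ito_vtx M N K)))
    (a : assignment M N K) : Prop :=
  forall i, match a i with
  | None => forall p, p \in P -> ito_agent i \notin p
  | Some (j, k) => exists2 p, p \in P &
      (nth ito_src p 1 == ito_agent i) &&
      (nth ito_src p (size p).-2 == ito_slot j k)
  end.

From mathcomp Require Import all_boot all_order all_algebra.
From mathcomp Require Import zify.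
Set Implicit Arguments. Unset Strict Implicit. Unset Printing Implicit Defensive.
Import Order.TTheory GRing.Theory Num.Theory.

(** An integral flow in the ITO network is acyclic (the rank source < agents <
    slots of increasing index < sink grows along every arc), so it decomposes
    into source-sink paths, each of the form source -> a_i -> s_{j,k0} -> ... ->
    s_{j,k} -> sink with e_{i,j} <= k0 T <= k T. The source and sink arcs have
    capacity 1, so distinct paths use distinct agents and distinct final slots:
    the paths read off a feasible assignment with as many active agents as the
    flow value. Conversely, a feasible assignment routes each active agent
    through its first reachable slot and down its station to its slot; agents
    of one station occupy distinct slots, so at most K of them share a chain
    arc, and this is a flow whose value is the number of active agents. Hence a
    maximum flow induces an assignment with the most active agents, i.e. with
    the least idle time T (N K - #active). *)

Lemma count_gt1 (T : eqType) (a : pred T) (s : seq T) x y :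
  x \in s -> y \in s -> x != y -> a x -> a y -> 1 < count a s.
Proof.
move=> xs ys xy ax ay; rewrite -size_filter.
apply: (@uniq_leq_size _ [:: x; y]); first by rewrite /= inE xy.
by move=> z; rewrite !inE mem_filter => /orP[] /eqP ->; rewrite ?ax ?ay ?xs ?ys.
Qed.

Lemma count_le_card (T : eqType) (J : finType) (h : T -> J) (a : pred T) s :
  uniq s -> {in s &, forall x y, a x -> a y -> h x = h y -> x = y} ->
  count a s <= #|J|.
Proof.
move=> us hinj; rewrite -size_filter -(size_map h).
have /card_uniqP <- : uniq (map h [seq x <- s | a x]).
  rewrite map_inj_in_uniq ?filter_uniq // => x y.
  by rewrite !mem_filter => /andP[ax xs] /andP[ay ys]; apply: hinj.
exact: max_card.
Qed.

Lemma uniq_count_le1 (T : eqType) (s : seq T) :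
  (forall x, count_mem x s <= 1) -> uniq s.
Proof.
move=> le1; apply: count_mem_uniq => x.
have [xs|/count_memPn //] := boolP (x \in s).
by apply/eqP; rewrite eqn_leq le1 -has_count has_pred1.
Qed.

Lemma count_le1 (T : eqType) (a : pred T) s :
  uniq s -> {in s &, forall x y, a x -> a y -> x = y} -> count a s <= 1.
Proof.
move=> us all_eq; rewrite -card_unit.
by apply: (count_le_card (h := fun=> tt) us) => x y xs ys ax ay _; apply: all_eq.
Qed.

Lemma sum_gt0P (I : finType) (F : I -> nat) :
  reflect (exists i, 0 < F i) (0 < \sum_i F i).
Proof.
rewrite lt0n sum_nat_seq_neq0; apply: (iffP hasP) => [[i _ /andP[_ Fi]]|[i Fi]].
  by exists i; rewrite lt0n.
by exists i; rewrite ?mem_index_enum //= -lt0n.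
Qed.

Section PathEdges.
Variable V : finType.
Implicit Types (x y z u v w : V) (r : seq V).

Lemma path_edgesE x r : path_edges (x :: r) = zip (belast x r) r.
Proof. by elim: r x => [|y r IH] x //=; rewrite -IH. Qed.

Lemma uniq_path_edges (p : seq V) : uniq p -> uniq (path_edges p).
Proof. exact: zip_uniql. Qed.

Lemma path_edges_cons x y r :
  path_edges [:: x, y & r] = (x, y) :: path_edges (y :: r).
Proof. by []. Qed.

Lemma mem_path_edges x r u v :
  (u, v) \in path_edges (x :: r) -> u \in x :: r /\ v \in r.
Proof.
elim: r x => [|y r IH] x //=; rewrite in_cons xpair_eqE.
case/orP => [/andP[/eqP -> /eqP ->]|/IH[uyr vr]]; first by rewrite !mem_head.
by split; rewrite in_cons ?uyr ?vr orbT.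
Qed.

Lemma path_edges_rel (e : rel V) x r u v :
  path e x r -> (u, v) \in path_edges (x :: r) -> e u v.
Proof.
elim: r x => [|y r IH] x //= /andP[exy pyr]; rewrite in_cons xpair_eqE.
by case/orP => [/andP[/eqP -> /eqP ->]|/(IH _ pyr)].
Qed.

Lemma mem_path_edges_head x y r v :
  x \notin y :: r -> ((x, v) \in path_edges [:: x, y & r]) = (v == y).
Proof.
move=> xr; rewrite path_edges_cons in_cons xpair_eqE eqxx /=.
by case: (boolP (_ \in _)) => [/mem_path_edges[/(negP xr)]|]; rewrite ?orbF.
Qed.

Lemma mem_path_edges_last x r u z :
  z \notin x :: r -> ((u, z) \in path_edges (rcons (x :: r) z)) = (u == last x r).
Proof.
elim: r x => [|y r IH] x.
  by move=> _; rewrite /path_edges /= mem_seq1 xpair_eqE eqxx andbT.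
rewrite in_cons negb_or => /andP[zx zyr].
rewrite rcons_cons path_edges_cons in_cons xpair_eqE IH //.
have zy : z != y by apply: contraNneq zyr => ->; exact: mem_head.
by rewrite (negbTE zy) andbF.
Qed.

Lemma sum_count_edges_in (E : seq (V * V)) w :
  \sum_u count_mem (u, w) E = count_mem w (unzip2 E).
Proof.
elim: E => [|[a b] E IH] /=; first by rewrite big1.
rewrite big_split IH /=; congr (_ + _).
rewrite (bigD1 a) //= big1 => [|u ua]; first by rewrite xpair_eqE eqxx addn0.
by rewrite xpair_eqE eq_sym (negbTE ua).
Qed.

Lemma sum_count_edges_out (E : seq (V * V)) w :
  \sum_v count_mem (w, v) E = count_mem w (unzip1 E).
Proof.
elim: E => [|[a b] E IH] /=; first by rewrite big1.
rewrite big_split IH /=; congr (_ + _).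
rewrite (bigD1 b) //= big1 => [|v vb]; first by rewrite xpair_eqE eqxx andbT addn0.
by rewrite xpair_eqE [b == v]eq_sym (negbTE vb) andbF.
Qed.

Lemma path_indegree x r w :
  \sum_u count_mem (u, w) (path_edges (x :: r)) = count_mem w r.
Proof. by rewrite sum_count_edges_in path_edgesE unzip2_zip // size_belast. Qed.

Lemma path_outdegree x r w :
  \sum_v count_mem (w, v) (path_edges (x :: r)) = count_mem w (belast x r).
Proof. by rewrite sum_count_edges_out path_edgesE unzip1_zip // size_belast. Qed.

Lemma path_conserve x r w : w != x -> w != last x r ->
  \sum_u count_mem (u, w) (path_edges (x :: r)) =
  \sum_v count_mem (w, v) (path_edges (x :: r)).
Proof.
move=> wx wl; rewrite path_indegree path_outdegree.
have := congr1 (count_mem w) (lastI x r).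
rewrite -cats1 count_cat /= eq_sym (negbTE wx) eq_sym (negbTE wl) add0n => ->.
exact: addn0.
Qed.

Lemma path_outdegree_head x r : x \notin r -> r != [::] ->
  \sum_v count_mem (x, v) (path_edges (x :: r)) = 1.
Proof.
case: r => [|y r] // xr _; rewrite path_outdegree /= eqxx.
by rewrite (count_memPn _) //; apply: contra xr => /mem_belast.
Qed.

End PathEdges.

(** * Flows in a network with rank-increasing arcs *)

Definition paths_flow (V : finType) (P : seq (seq V)) (u v : V) : nat :=
  \sum_(p <- P) count_mem (u, v) (path_edges p).

Lemma rank_path_uniq (V : eqType) (e : rel V) (rank : V -> nat) x r :
  (forall u v, e u v -> rank u < rank v) -> path e x r -> uniq (x :: r).
Proof.
move=> erank exr; apply: (@sorted_uniq _ (relpre rank ltn)).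
- by move=> y x' z /=; apply: ltn_trans.
- by move=> y /=; rewrite ltnn.
- by apply: sub_path exr => u v /erank.
Qed.

Section RankedNetwork.
Variables (V : finType) (cap : V -> V -> nat) (s t : V) (rank : V -> nat).
Hypothesis cap_rank : forall u v, 0 < cap u v -> rank u < rank v.
Hypothesis cap_to_source : forall u, cap u s = 0.
Hypothesis cap_from_sink : forall v, cap t v = 0.

Lemma st_path_uniq p : st_path cap s t p -> uniq p.
Proof. by case=> r [-> [_ pr]]; apply: rank_path_uniq cap_rank pr. Qed.

Lemma paths_flowE P u v : (forall p, p \in P -> st_path cap s t p) ->
  paths_flow P u v = count (fun p => (u, v) \in path_edges p) P.
Proof.
move=> Pst; rewrite /paths_flow -sum1_count [RHS]big_mkcond /=.
apply: eq_big_seq => p /Pst /st_path_uniq up.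
by rewrite count_uniq_mem ?uniq_path_edges //; case: (_ \in _).
Qed.

Lemma paths_flow_conserve P w : (forall p, p \in P -> st_path cap s t p) ->
  w != s -> w != t -> \sum_u paths_flow P u w = \sum_v paths_flow P w v.
Proof.
move=> Pst ws wt; rewrite /paths_flow exchange_big [RHS]exchange_big /=.
by apply: eq_big_seq => p /Pst [r [-> [rt _]]]; apply: path_conserve; rewrite ?rt.
Qed.

Lemma path_decomposition_value f P :
  s != t -> path_decomposition cap s t f P -> flow_value s f = size P.
Proof.
move=> st [Pst fP]; rewrite /flow_value.
have path_s q : q \in P -> exists2 r, q = s :: r & (s \notin r) && (r != [::]).
  move=> /Pst qst; have := st_path_uniq qst; case: qst => r [-> [rt _]].
  rewrite cons_uniq => /andP[sr _]; exists r; rewrite // sr.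
  by case: r rt {sr} => //= st'; rewrite st' eqxx in st.
have -> : \sum_v f s v = size P.
  under eq_bigr do rewrite fP; rewrite exchange_big -sum1_size /=.
  by apply: eq_big_seq => q /path_s [r -> /andP[sr r0]]; apply: path_outdegree_head.
have -> : \sum_v f v s = 0.
  under eq_bigr do rewrite fP; rewrite exchange_big big1_seq //= => q /path_s [r ->].
  by rewrite path_indegree => /andP[/count_memPn].
by rewrite subr0.
Qed.

Lemma flow_arc f u v : is_flow cap s t f -> 0 < f u v -> 0 < cap u v.
Proof. by case=> fcap _ /leq_trans; apply. Qed.

Lemma flow_walk_to_sink f u v : is_flow cap s t f -> 0 < f u v ->
  exists2 c, path (fun x y => 0 < f x y) v c & last v c = t.
Proof.
move=> ff; have [n] := ubnP (\max_x rank x - rank v).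
elim: n u v => // n IH u v bound fuv.
have [-> | vt] := eqVneq v t; first by exists [::].
have vs : v != s by apply: contraTneq (flow_arc ff fuv) => ->; rewrite cap_to_source.
have [y fvy] : exists y, 0 < f v y.
  by apply/sum_gt0P; rewrite -ff.2 //; apply/sum_gt0P; exists u.
have rank_vy := cap_rank (flow_arc ff fvy).
have rank_y : rank y <= \max_x rank x := leq_bigmax y.
have [|c yc ct] := IH v y _ fvy; first by lia.
by exists (y :: c); rewrite /= ?fvy.
Qed.

Lemma flow_arc_from_source f u v : is_flow cap s t f -> 0 < f u v ->
  exists v', 0 < f s v'.
Proof.
(* A positive arc with lowest-ranked tail leaves the source: otherwise
   conservation yields a positive arc into its tail, of smaller rank. *)
move=> ff fuv.
case: (@arg_minnP _ (u, v) (fun a => 0 < f a.1 a.2) (fun a => rank a.1) fuv).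
move=> [u' v'] /= fuv' minimal; exists v'; suff <- : u' = s by [].
apply/eqP; apply/negPn/negP => u's.
have u't : u' != t by apply: contraTneq (flow_arc ff fuv') => ->; rewrite cap_from_sink.
have [x fxu] : exists x, 0 < f x u'.
  by apply/sum_gt0P; rewrite ff.2 //; apply/sum_gt0P; exists v'.
by have := minimal (x, u') fxu; rewrite leqNgt cap_rank // (flow_arc ff fxu).
Qed.

Theorem flow_path_decomposition f :
  is_flow cap s t f -> exists P, path_decomposition cap s t f P.
Proof.
have [n] := ubnP (\sum_v f s v); elim: n f => // n IH f out_f ff.
case: (pickP (fun a : V * V => 0 < f a.1 a.2)) => [[u v] /= fuv | f0]; last first.
  exists [::]; split=> // u v; rewrite big_nil; apply/eqP.
  by rewrite -leqn0 leqNgt; exact/negbT/(f0 (u, v)).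
have [v0 fsv0] := flow_arc_from_source ff fuv.
have [c v0c ct] := flow_walk_to_sink ff fsv0.
set p := [:: s, v0 & c].
have fp : path (fun x y => 0 < f x y) s (v0 :: c) by rewrite /= fsv0.
have p_st : st_path cap s t p.
  by exists (v0 :: c); split=> //; split=> //; apply: sub_path fp => x y /(flow_arc ff).
have up := st_path_uniq p_st.
have p_le_f u' v' : count_mem (u', v') (path_edges p) <= f u' v'.
  rewrite count_uniq_mem ?uniq_path_edges //.
  by case: (boolP (_ \in _)) => // /(path_edges_rel fp).
pose g u' v' := f u' v' - count_mem (u', v') (path_edges p).
have gf : is_flow cap s t g.
  split=> [u' v'|w ws wt]; first exact: leq_trans (leq_subr _ _) (ff.1 u' v').
  rewrite (sumnB _ (fun u' _ => p_le_f u' w)) (sumnB _ (fun v' _ => p_le_f w v')).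
  rewrite ff.2 //.
  by rewrite path_conserve //= ct.
have out_g : \sum_v g s v < n.
  rewrite (sumnB _ (fun v' _ => p_le_f s v')) path_outdegree_head //; last first.
    by move: up; rewrite cons_uniq => /andP[].
  have pos : 0 < \sum_v f s v by apply/sum_gt0P; exists v0.
  by rewrite subn1 -ltnS (ltn_predK pos).
have [P [Pst gP]] := IH g out_g gf.
exists (p :: P); split; first by move=> q; rewrite inE => /orP[/eqP -> | /Pst].
by move=> u' v'; rewrite big_cons -gP subnKC.
Qed.

End RankedNetwork.

(** * The ITO network *)

Section ItoNetwork.
Variables (R : realFieldType) (M N K T : nat) (e : 'I_M -> 'I_N -> R).

Local Notation V := (ito_vtx M N K).
Local Notation cap := (ito_cap T e).
Local Notation src := (@ito_src M N K).
Local Notation snk := (@ito_snk M N K).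
Local Notation agent := (@ito_agent M N K).
Local Notation slot := (@ito_slot M N K).
Local Notation arc := (fun u v : V => 0 < cap u v).
Local Notation reachable i j k := (e i j <= ((k * T)%N)%:R)%R.

Definition ito_rank (v : V) : nat :=
  match v with
  | inl true => 0
  | inr (inl _) => 1
  | inr (inr (_, k)) => k.+2
  | inl false => K.+2
  end.

Lemma ito_cap_rank u v : 0 < cap u v -> ito_rank u < ito_rank v.
Proof.
case: u => [[]|[i|[j k]]]; case: v => [[]|[i'|[j' k']]] //=.
all: first [by move=> _; rewrite !ltnS ltn_ord | by case: ifP => // /andP[_ /eqP ->]].
Qed.

Lemma ito_cap_to_src u : cap u src = 0.
Proof. by case: u => [[]|[i|[j k]]]. Qed.

Lemma ito_cap_from_snk v : cap snk v = 0.
Proof. by case: v => [[]|[i|[j k]]]. Qed.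

Lemma ito_cap_from_src_le1 v : cap src v <= 1.
Proof. by case: v => [[]|[]]. Qed.

Definition slot_path i j k (p : seq V) : Prop :=
  exists r : seq 'I_K,
    p = [:: src, agent i & rcons (rcons (map (slot j) r) (slot j k)) snk].

Lemma mem_station_tail j k r v :
  v \in rcons (rcons (map (slot j) r) (slot j k)) snk ->
  v = snk \/ exists k', v = slot j k'.
Proof.
rewrite mem_rcons in_cons mem_rcons in_cons.
case/or3P=> [/eqP ->|/eqP ->|/mapP[k' _ ->]]; first by left.
  by right; exists k.
by right; exists k'.
Qed.

Section SlotPath.
Variables (i : 'I_M) (j : 'I_N) (k : 'I_K) (p : seq V).
Hypothesis ijk_p : slot_path i j k p.

Lemma slot_path_nth : nth src p 1 = agent i /\ nth src p (size p).-2 = slot j k.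
Proof.
case: ijk_p => r ->; split=> //=.
rewrite !size_rcons size_map /= nth_rcons size_rcons size_map ltnSn.
by rewrite nth_rcons size_map ltnn eqxx.
Qed.

Lemma slot_path_agent i' : agent i' \in p -> i' = i.
Proof.
case: ijk_p => r ->; rewrite !in_cons.
by case/or3P=> [//|/eqP[]//|/mem_station_tail[//|[? []]]].
Qed.

Lemma slot_path_station j' k' : slot j' k' \in p -> j' = j.
Proof.
case: ijk_p => r ->; rewrite !in_cons.
by case/or3P=> [//|//|/mem_station_tail[//|[? []]]].
Qed.

Lemma slot_path_src_edge v : ((src, v) \in path_edges p) = (v == agent i).
Proof.
case: ijk_p => r ->; apply: mem_path_edges_head.
by rewrite in_cons; apply/norP; split=> //; apply/negP => /mem_station_tail[|[]].
Qed.

Lemma slot_path_snk_edge u : ((u, snk) \in path_edges p) = (u == slot j k).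
Proof.
case: ijk_p => r ->.
rewrite -[[:: _, _ & _]]/
  (rcons [:: src, agent i & rcons (map (slot j) r) (slot j k)] snk).
rewrite mem_path_edges_last /= ?last_rcons //.
by rewrite !in_cons mem_rcons in_cons; apply/negP => /or4P[| | |/mapP[]].
Qed.

Lemma slot_path_agent_edge i' v : (agent i', v) \in path_edges p -> i' = i.
Proof.
by move=> uv; apply: slot_path_agent; case: ijk_p uv => r -> /mem_path_edges[].
Qed.

Lemma slot_path_station_edge j' k' v : (slot j' k', v) \in path_edges p -> j' = j.
Proof.
move=> uv; apply: (@slot_path_station _ k').
by case: ijk_p uv => r -> /mem_path_edges[].
Qed.

End SlotPath.

Lemma station_walk j (k0 : 'I_K) rest :
  path arc (slot j k0) rest -> last (slot j k0) rest = snk ->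
  exists (k : 'I_K) (r : seq 'I_K),
    slot j k0 :: rest = rcons (rcons (map (slot j) r) (slot j k)) snk /\ k0 <= k.
Proof.
elim: rest k0 => [|v rest IH] k0 //= /andP[k0_v walk] last_snk.
case: v k0_v walk last_snk => [[]|[i|[j' k']]] //= k0_v.
  case: rest {IH} => [_ _|w rest]; first by exists k0, [::].
  by case: w => [[]|[]].
move: k0_v; case: ifP => // /andP[/eqP <- /eqP k'E] _ walk last_snk.
have [k [r [-> k'k]]] := IH k' walk last_snk.
by exists k, (k0 :: r); split; last by rewrite k'E in k'k; apply: ltnW.
Qed.

Lemma st_path_slot_path p : st_path cap src snk p ->
  exists i j k, slot_path i j k p /\ reachable i j k.
Proof.
case=> rest [-> [last_snk walk]].
case: rest last_snk walk => [//|a rest] /= last_snk /andP[src_a walk].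
case: a src_a walk last_snk => [[]|[i|[j k]]] //= _.
case: rest => [//|b rest] /= /andP[a_b walk] last_snk.
case: b a_b walk last_snk => [[]|[i'|[j k0]]] //=.
case: ifP => // /andP[reach0 _] _ walk last_snk.
have [k [r [walkE k0k]]] := station_walk walk last_snk.
exists i, j, k; split; first by exists r; rewrite -walkE.
by apply: le_trans reach0 _; rewrite ler_nat leq_mul2r k0k orbT.
Qed.

Lemma ito_flow_decomposition f : is_flow cap src snk f ->
  exists P, path_decomposition cap src snk f P.
Proof.
exact: (@flow_path_decomposition _ cap src snk _
          ito_cap_rank ito_cap_to_src ito_cap_from_snk).
Qed.

Definition slot_of (v : V) : option ('I_N * 'I_K) :=
  if v is inr (inr jk) then Some jk else None.

Definition path_assignment (P : seq (seq V)) : assignment M N K := fun i =>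
  if [seq p <- P | nth src p 1 == agent i] is p :: _
  then slot_of (nth src p (size p).-2) else None.

Definition assigned (a : assignment M N K) : {set 'I_M} := [set i | a i != None].

Section PathAssignment.
Variables (f : V -> V -> nat) (P : seq (seq V)).
Hypotheses (ff : is_flow cap src snk f) (fP : path_decomposition cap src snk f P).

Lemma decomposition_slot_path p : p \in P ->
  exists i j k, slot_path i j k p /\ reachable i j k.
Proof. by move/fP.1; apply: st_path_slot_path. Qed.

Lemma decomposition_flowE u v : f u v = count (fun p => (u, v) \in path_edges p) P.
Proof. by rewrite fP.2; apply: (paths_flowE ito_cap_rank); apply: fP.1. Qed.

Lemma path_assignment_Some i j k : path_assignment P i = Some (j, k) ->
  exists2 p, p \in P & slot_path i j k p /\ reachable i j k.
Proof.
rewrite /path_assignment; case E: [seq p <- P | _] => [//|p ps] p_jk.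
have : p \in [seq p <- P | nth src p 1 == agent i] by rewrite E mem_head.
rewrite mem_filter => /andP[/eqP p_i pP]; exists p => //.
have [i' [j' [k' [ijk_p reach]]]] := decomposition_slot_path pP.
have [p_i' p_jk'] := slot_path_nth ijk_p.
by move: p_i p_jk reach; rewrite p_i' p_jk' /= => -[<-] [<- <-].
Qed.

Lemma path_assignment_neq_None i p : p \in P -> nth src p 1 = agent i ->
  path_assignment P i != None.
Proof.
move=> pP p_i; rewrite /path_assignment; case E: [seq q <- P | _] => [|q qs].
  have : p \in [seq q <- P | nth src q 1 == agent i] by rewrite mem_filter p_i eqxx.
  by rewrite E.
have : q \in [seq q <- P | nth src q 1 == agent i] by rewrite E mem_head.
rewrite mem_filter => /andP[_ /decomposition_slot_path[i' [j [k [ijk_q _]]]]].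
by rewrite (slot_path_nth ijk_q).2.
Qed.

Lemma path_assignment_induced : induced_assignment P (path_assignment P).
Proof.
move=> i; case ai: (path_assignment P i) => [[j k]|].
  have [p pP [ijk_p _]] := path_assignment_Some ai.
  by exists p => //; rewrite (slot_path_nth ijk_p).1 (slot_path_nth ijk_p).2 !eqxx.
move=> p pP; apply/negP => ip.
have [i' [j [k [ijk_p _]]]] := decomposition_slot_path pP.
have := path_assignment_neq_None pP (slot_path_nth ijk_p).1.
by rewrite -(slot_path_agent ijk_p ip) ai.
Qed.

Lemma path_assignment_feasible : feasible T e (path_assignment P).
Proof.
split=> [i j k /path_assignment_Some[p _ []] // | i i' ai_some ai_i'].
case aiE: (path_assignment P i) ai_some ai_i' => [[j k]|//] _ ai'E.
have [p pP [ijk_p _]] := path_assignment_Some aiE.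
have [p' p'P [ijk_p' _]] := path_assignment_Some (esym ai'E).
apply/eqP; apply: contraT => ii'.
have pp' : p != p'.
  apply: contra ii' => /eqP pp'.
  by move: (slot_path_nth ijk_p).1 (slot_path_nth ijk_p').1; rewrite pp' => -> [->].
have := ff.1 (slot j k) snk; rewrite decomposition_flowE leqNgt /=.
rewrite (count_gt1 (a := fun q => (slot j k, snk) \in path_edges q) pP p'P pp') //=.
  by rewrite (slot_path_snk_edge ijk_p).
by rewrite (slot_path_snk_edge ijk_p').
Qed.

Lemma decomposition_value_le :
  (flow_value src f <= #|assigned (path_assignment P)|)%R.
Proof.
rewrite (path_decomposition_value ito_cap_rank _ fP) // lez_nat.
have uniq_agents : uniq [seq nth src p 1 | p <- P].
  apply: uniq_count_le1 => v; rewrite count_map.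
  apply: leq_trans (ito_cap_from_src_le1 v); apply: leq_trans (ff.1 src v).
  rewrite decomposition_flowE leq_eqVlt; apply/orP; left; apply/eqP.
  apply: eq_in_count => p /decomposition_slot_path[i [j [k [ijk_p _]]]] /=.
  by rewrite (slot_path_src_edge ijk_p) (slot_path_nth ijk_p).1 eq_sym.
rewrite -(size_map (nth src ^~ 1)) cardE -(size_map agent).
apply: uniq_leq_size uniq_agents _ => _ /mapP[p pP ->].
have [i [j [k [ijk_p _]]]] := decomposition_slot_path pP.
have p_i := (slot_path_nth ijk_p).1.
by rewrite p_i map_f // mem_enum inE (path_assignment_neq_None pP p_i).
Qed.

End PathAssignment.

Definition first_slot_of i j (k : 'I_K) : 'I_K :=
  [arg min_(k' < k | reachable i j k') k'].

Lemma first_slot_ofP i j (k : 'I_K) : reachable i j k ->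
  first_slot T e i j (first_slot_of i j k) /\ first_slot_of i j k <= k.
Proof.
move=> reach; rewrite /first_slot_of; case: arg_minnP => // k0 reach0 min0.
split; last exact: min0.
rewrite /first_slot reach0; apply/forallP => k'; apply/implyP => k'k0.
by apply/negP => /min0; rewrite leqNgt k'k0.
Qed.

Lemma station_chain_path j (k : 'I_K) x m n : m + n = k ->
  0 < cap x (slot j (insubd k m)) ->
  path arc x
    (rcons (rcons [seq slot j (insubd k m') | m' <- iota m n] (slot j k)) snk).
Proof.
elim: n m x => [|n IH] m x; first by rewrite addn0 => -> /=; rewrite valKd => ->.
move=> mnk /= x_m; rewrite x_m; apply: IH; first by rewrite addSnnS.
have m1K : m.+1 < K by have := ltn_ord k; lia.
by rewrite /= eqxx !val_insubd m1K (ltnW m1K) eqxx /=; lia.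
Qed.

Section FeasibleAssignmentFlow.
Variable b : assignment M N K.
Hypothesis b_feasible : feasible T e b.

(* The default [k] of [insubd] is never used: all indices lie in [k0, k]. *)
Definition assigned_path i : seq V :=
  if b i is Some (j, k) then
    let k0 := first_slot_of i j k in
    [:: src, agent i
      & rcons (rcons [seq slot j (insubd k m) | m <- iota k0 (k - k0)] (slot j k)) snk]
  else [::].

Lemma assigned_pathP i j k : b i = Some (j, k) ->
  slot_path i j k (assigned_path i) /\ st_path cap src snk (assigned_path i).
Proof.
move=> bi; rewrite /assigned_path bi; set k0 := first_slot_of i j k.
have [first_k0 k0k] := first_slot_ofP (b_feasible.1 _ _ _ bi).
split; first by exists [seq insubd k m | m <- iota k0 (k - k0)]; rewrite -map_comp.
eexists; split; first reflexivity; split; first by rewrite /= last_rcons.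
by rewrite /= (station_chain_path (subnKC k0k)) //= valKd first_k0.
Qed.

Definition assigned_paths : seq (seq V) :=
  [seq assigned_path i | i <- enum (assigned b)].

Lemma assigned_path_of i : i \in assigned b ->
  exists j k, b i = Some (j, k) /\ slot_path i j k (assigned_path i).
Proof.
rewrite inE; case bi: (b i) => [[j k]|] // _.
by exists j, k; split; last exact: (assigned_pathP bi).1.
Qed.

Lemma assigned_paths_st p : p \in assigned_paths -> st_path cap src snk p.
Proof.
case/mapP => i /[!mem_enum] /assigned_path_of[j [k [bi _]]] ->.
exact: (assigned_pathP bi).2.
Qed.

Lemma assigned_flow_cap u v : paths_flow assigned_paths u v <= cap u v.
Proof.
rewrite (paths_flowE ito_cap_rank _ _ assigned_paths_st) count_map.
have [-> // | a_pos] := posnP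
  (count (preim assigned_path (fun p => (u, v) \in path_edges p)) (enum (assigned b))).
have arc_uv : 0 < cap u v.
  move: a_pos; rewrite -has_count => /hasP[x]; rewrite mem_enum => /assigned_path_of.
  case=> j [k [bx _]]; case: (assigned_pathP bx).2 => r [pE [_ walk]].
  by rewrite /= pE => /(path_edges_rel walk).
have b_inj x y j k : b x = Some (j, k) -> b y = Some (j, k) -> x = y.
  by move=> bx byE; apply: b_feasible.2; rewrite ?bx ?byE.
have uniq_enum := enum_uniq (assigned b).
case: u v arc_uv {a_pos} => [[]|[i|[j k]]] [[]|[i'|[j' k']]] //= arc_uv.
- apply: count_le1 uniq_enum _ => x y /[!mem_enum].
  move=> /assigned_path_of[? [? [_ xp]]] /assigned_path_of[? [? [_ yp]]] /=.
  by rewrite (slot_path_src_edge xp) (slot_path_src_edge yp) => /eqP[->] /eqP[->].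
- move: arc_uv; case: ifP => // _ _.
  apply: count_le1 uniq_enum _ => x y /[!mem_enum].
  move=> /assigned_path_of[? [? [_ xp]]] /assigned_path_of[? [? [_ yp]]] /=.
  by move=> /(slot_path_agent_edge xp) ix /(slot_path_agent_edge yp) iy; rewrite -ix -iy.
- apply: count_le1 uniq_enum _ => x y /[!mem_enum].
  move=> /assigned_path_of[jx [kx [bx xp]]] /assigned_path_of[jy [ky [byE yp]]] /=.
  rewrite (slot_path_snk_edge xp) (slot_path_snk_edge yp) => /eqP[jE kE] /eqP[jE' kE'].
  by apply: (b_inj _ _ j k); [rewrite bx jE kE | rewrite byE jE' kE'].
- move: arc_uv; case: ifP => // _ _; rewrite -[X in _ <= X](card_ord K).
  apply: (count_le_card (h := fun x => odflt k (omap snd (b x))) uniq_enum).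
  move=> x y /[!mem_enum] /assigned_path_of[jx [kx [bx xp]]].
  move=> /assigned_path_of[jy [ky [byE yp]]] /=.
  move=> /(slot_path_station_edge xp) jE /(slot_path_station_edge yp) jE'.
  by rewrite bx byE /= => kE; apply: (b_inj x y jx kx); rewrite // byE -jE -jE' kE.
Qed.

Lemma assigned_flow : is_flow cap src snk (paths_flow assigned_paths).
Proof.
split; first exact: assigned_flow_cap.
by move=> w ws wt; apply: paths_flow_conserve assigned_paths_st ws wt.
Qed.

Lemma assigned_flow_value :
  flow_value src (paths_flow assigned_paths) = #|assigned b|.
Proof.
have dec : path_decomposition cap src snk (paths_flow assigned_paths) assigned_paths.
  by split=> //; apply: assigned_paths_st.
rewrite (path_decomposition_value ito_cap_rank _ dec) //.
by rewrite /assigned_paths size_map -cardE.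
Qed.

End FeasibleAssignmentFlow.

End ItoNetwork.

Theorem theorem1 (R : realFieldType) (M N K T : nat)
    (e : 'I_M -> 'I_N -> R) :
  (0 < T)%N -> (0 < K)%N ->
  (forall i j, (0 <= e i j)%R) ->
  forall f : ito_vtx M N K -> ito_vtx M N K -> nat,
    is_max_flow (ito_cap T e) ito_src ito_snk f ->
    (exists P, path_decomposition (ito_cap T e) ito_src ito_snk f P) /\
    (forall P, path_decomposition (ito_cap T e) ito_src ito_snk f P ->
       exists a : assignment M N K,
         induced_assignment P a /\ min_idle T e a).
Proof.
move=> _ _ _ f [ff f_max]; split.
  exact: ito_flow_decomposition ff.
move=> P fP; exists (path_assignment P).
split; first exact: path_assignment_induced fP.
split; first exact: path_assignment_feasible ff fP.
move=> b b_feasible; apply: leq_mul => //; apply: leq_sub2l; rewrite -lez_nat.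
have := f_max _ (assigned_flow b_feasible).
rewrite (assigned_flow_value b_feasible) => /le_trans; apply.
exact: decomposition_value_le ff fP.
Qed.
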